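(* Let $n\geq 3$ and let $N=(V,A)$ be a proper binary level-1 network on $n$ leaves. Then $2n+1\leq |V|\leq 3n-2$ and $2n+1\leq |A|\leq 3.5(n-1)$. Moreover, if $n=3$ then $|V|=|A|=7$ (so all four bounds are attained) and $N$ is a simple network.
   Context: A leaf of a directed acyclic graph (DAG) is a vertex of in-degree 1 and out-degree 0. For a finite set $X$, a phylogenetic network on $X$ is a DAG (no loops, no multiple arcs) with a unique vertex $\rho_N$ (the root) of in-degree 0, which has out-degree at least 2, whose set of leaves is $X$, and in which every vertex other than the root and the leaves is either a split vertex (in-degree 1, out-degree $\geq 2$) or a hybrid vertex (in-degree $\geq 2$, out-degree $\geq 1$). It is binary if the root and all split vertices have out-degree 2 and every hybrid vertex has in-degree 2 and out-degree 1. $U(N)$ denotes the underlying undirected graph. A binary level-1 network is a binary phylogenetic network in which every biconnected component of $U(N)$ contains at most one hybrid vertex; by standing convention every cycle of $U(N)$ has at least four vertices. A gall of a level-1 network is a biconnected component of $U(N)$ with more than one edge (with the arc directions of $N$). A level-1 network is proper if it has at least one hybrid vertex (equivalently at least one gall). A binary level-1 network is simple if it has exactly one gall and every leaf is adjacent to a vertex of that gall. *)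

From mathcomp Require Import all_boot.
Set Implicit Arguments. Unset Strict Implicit. Unset Printing Implicit Defensive.

(* A finite directed graph (no multiple arcs by construction) is given by a
   finite vertex type T and an arc relation a : rel T. *)
Section Net.
Variables (T : finType) (a : rel T).

Definition indeg (v : T) : nat := #|[set u | a u v]|.
Definition outdeg (v : T) : nat := #|[set w | a v w]|.

Definition narcs : nat := #|[set p : T * T | a p.1 p.2]|.

Definition acyclic : Prop :=
  (forall v, ~~ a v v) /\ (forall u v, a u v -> ~~ connect a v u).

Definition is_leaf (v : T) : bool := (indeg v == 1) && (outdeg v == 0).
Definition leaves : {set T} := [set v | is_leaf v].
Definition is_split (v : T) : bool := (indeg v == 1) && (2 <= outdeg v).
Definition is_hybrid (v : T) : bool := (2 <= indeg v) && (1 <= outdeg v).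

Definition phylo_network_root (r : T) : Prop :=
  [/\ acyclic,
      indeg r = 0, 2 <= outdeg r,
      (forall v, indeg v = 0 -> v = r) &
      (forall v, v != r -> is_leaf v || is_split v || is_hybrid v)].

Definition phylo_network : Prop := exists r, phylo_network_root r.

Definition binary_network : Prop :=
  exists r, phylo_network_root r /\ outdeg r = 2 /\
    (forall v, is_split v -> outdeg v = 2) /\
    (forall v, is_hybrid v -> indeg v = 2 /\ outdeg v = 1).

Definition uedge : rel T := fun x y => a x y || a y x.

Definition uconnected (S : {set T}) : bool :=
  [forall u in S, forall w in S,
     connect (fun x y => [&& x \in S, y \in S & uedge x y]) u w].

(* S spans a biconnected subgraph: at least two vertices, connected, and
   no cut vertex (this includes a single edge K2). *)
Definition biconnected (S : {set T}) : bool :=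
  [&& 1 < #|S|, uconnected S & [forall v in S, uconnected (S :\ v)]].

(* biconnected components of U(N) (blocks), given by their vertex sets;
   blocks are induced subgraphs *)
Definition bicomponent (S : {set T}) : bool := maxset biconnected S.

Definition nedges_in (S : {set T}) : nat :=
  #|[set p : T * T | [&& p.1 \in S, p.2 \in S & a p.1 p.2]]|.

(* standing convention: every cycle of U(N) has at least four vertices,
   i.e. U(N) has no triangle *)
Definition no_triangle : Prop :=
  forall x y z, uedge x y -> uedge y z -> uedge z x ->
    x = y \/ y = z \/ z = x.

Definition binary_level1 : Prop :=
  [/\ binary_network,
      (forall S, bicomponent S -> #|[set v in S | is_hybrid v]| <= 1) &
      no_triangle].

Definition is_gall (S : {set T}) : bool := bicomponent S && (1 < nedges_in S).

Definition proper_network : Prop := exists v, is_hybrid v.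

Definition simple_network : Prop :=
  binary_level1 /\
  exists G, [/\ is_gall G, (forall G', is_gall G' -> G' = G) &
                (forall x, is_leaf x -> exists2 v, v \in G & uedge x v)].

End Net.

From mathcomp Require Import all_boot zify.
Set Implicit Arguments. Unset Strict Implicit. Unset Printing Implicit Defensive.

(* Split the vertices into the root, n leaves, s split and h hybrid vertices.
   Counting arcs by tails and by heads gives |A| = 2 + 2s + h = n + s + 2h,
   and |V| = 1 + n + s + h.  Level-1 adds 3h <= s + 1: every hybrid v lies
   in a biconnected set with at least four vertices (an undirected cycle
   through v; triangles are excluded), whose vertices other than v are the
   root or splits, and these sets are disjoint for distinct hybrids: two of
   them share at most one vertex (otherwise their union is biconnected with
   two hybrids), and a shared vertex would have two neighbours in each, i.e.
   degree >= 4.  Hence 1 <= h and 2h <= n - 1, which gives the four bounds;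
   for n = 3 they force h = 1 and s = 2, so the cycle through the hybrid
   contains every non-leaf vertex and its block is the only gall. *)

Definition splits (T : finType) (a : rel T) : {set T} := [set v | is_split a v].
Definition hybrids (T : finType) (a : rel T) : {set T} := [set v | is_hybrid a v].

Lemma connect_step_from (T : finType) (e : rel T) x z :
  connect e x z -> x != z -> exists y, e x y.
Proof.
case/connectP => [[|y p]] /=; first by move=> _ ->; rewrite eqxx.
by case/andP => exy _ _ _; exists y.
Qed.

Lemma sum_indicator (T : finType) (P : pred T) k :
  \sum_x (if P x then k else 0) = #|[set x | P x]| * k.
Proof. by rewrite -big_mkcond sum_nat_cond_const. Qed.

Section UnderlyingGraph.
Variables (T : finType) (a : rel T).
Implicit Types S : {set T}.

Definition uedge_in (S : {set T}) : rel T :=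
  fun x y => [&& x \in S, y \in S & uedge a x y].

Lemma uedge_sym : symmetric (uedge a).
Proof. by move=> x y; rewrite /uedge orbC. Qed.

Lemma uedge_in_sym S : symmetric (uedge_in S).
Proof. by move=> x y; rewrite /uedge_in uedge_sym andbCA. Qed.

Lemma connect_uedge_in_sym S : connect_sym (uedge_in S).
Proof. exact/sym_connect_sym/uedge_in_sym. Qed.

Lemma uconnectedP S :
  reflect (forall u w, u \in S -> w \in S -> connect (uedge_in S) u w)
          (uconnected a S).
Proof.
apply: (iffP forallP) => [H u w uS wS | H u].
  by move: (H u) => /implyP /(_ uS) /forallP /(_ w) /implyP /(_ wS).
by apply/implyP => uS; apply/forallP => w; apply/implyP => wS; apply: H.
Qed.

Lemma connect_uedge_in_subset S S' x y :
  S \subset S' -> connect (uedge_in S) x y -> connect (uedge_in S') x y.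
Proof.
move=> sSS'; apply: connect_sub => u w /and3P [uS wS e].
by apply: connect1; rewrite /uedge_in (subsetP sSS' _ uS) (subsetP sSS' _ wS).
Qed.

Lemma uconnectedU S S' z :
  uconnected a S -> uconnected a S' -> z \in S -> z \in S' ->
  uconnected a (S :|: S').
Proof.
move=> /uconnectedP cS /uconnectedP cS' zS zS'.
have to_z u : u \in S :|: S' -> connect (uedge_in (S :|: S')) u z.
  case/setUP => uS.
    by apply: (connect_uedge_in_subset (subsetUl S S')); apply: cS.
  by apply: (connect_uedge_in_subset (subsetUr S S')); apply: cS'.
apply/uconnectedP => u w uS wS; apply: connect_trans (to_z _ uS) _.
by rewrite connect_uedge_in_sym; apply: to_z.
Qed.

Lemma biconnected_uconnectedD1 S u :
  biconnected a S -> uconnected a (S :\ u).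
Proof.
case/and3P => _ cS /forall_inP cSD1.
have [uS|uNS] := boolP (u \in S); first exact: cSD1.
by rewrite (setDidPl _) // disjoint_sym disjoints1.
Qed.

(* Two biconnected sets sharing two vertices: removing any vertex leaves a
   common vertex through which the two connected remainders are glued. *)
Lemma biconnectedU S S' :
  biconnected a S -> biconnected a S' -> 1 < #|S :&: S'| ->
  biconnected a (S :|: S').
Proof.
move=> bS bS' /card_gt1P [x [y [xI yI xy]]].
move: xI yI; rewrite !inE => /andP [xS xS'] /andP [yS yS'].
apply/and3P; split.
- case/and3P: bS => S_gt1 _ _; apply: leq_trans S_gt1 _.
  exact/subset_leq_card/subsetUl.
- by case/and3P: bS => _ cS _; case/and3P: bS' => _ cS' _; apply: uconnectedU xS xS'.
- apply/forall_inP => u _; rewrite setDUl.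
  have [cS cS'] := (biconnected_uconnectedD1 u bS, biconnected_uconnectedD1 u bS').
  have [xu|xu] := eqVneq x u.
    by apply: (uconnectedU (z := y)); rewrite // !inE -xu eq_sym xy.
  by apply: (uconnectedU (z := x)); rewrite // !inE xu.
Qed.

Lemma uedge_in_path_mem S x p : path (uedge_in S) x p -> all (mem S) p.
Proof.
by elim: p x => [//|y p IH] x /= /andP [/and3P [_ yS _] pth]; rewrite yS (IH y).
Qed.

Lemma uconnected_path S x p :
  path (uedge a) x p -> S =i x :: p -> uconnected a S.
Proof.
move=> pth Sp.
have pS : path (uedge_in S) x p.
  apply: (sub_in_path (P := mem S) _ _ pth); last by apply/allP => z; rewrite -Sp.
  by move=> u w uS wS e; rewrite /uedge_in uS wS e.
apply/uconnectedP => u w; rewrite !Sp => uxp wxp.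
have cx := path_connect pS.
by apply: connect_trans (cx _ wxp); rewrite connect_uedge_in_sym; apply: cx.
Qed.

Lemma cycle_biconnected c :
  uniq c -> cycle (uedge a) c -> 1 < size c -> biconnected a [set x in c].
Proof.
move=> uc cc c_gt1.
apply/and3P; split; first by rewrite cardsE (card_uniqP uc).
- case: c uc cc {c_gt1} => [|x p] _ /=.
    by move=> _; apply/uconnectedP => u; rewrite inE.
  rewrite rcons_path => /andP [pth _].
  by apply: (uconnected_path pth) => z; rewrite inE.
- apply/forall_inP => y; rewrite inE => yc.
  have := rot_index yc; set i := index y c => c_rot.
  have : cycle (uedge a) (rot i c) by rewrite rot_cycle.
  have : uniq (rot i c) by rewrite rot_uniq.
  rewrite c_rot; set q := (drop _ _ ++ _) => /= /andP [yNq _].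
  rewrite rcons_path => /andP [pth _].
  have memq z : (z \in [set x in c] :\ y) = (z \in q).
    rewrite !inE -(mem_rot i) c_rot inE.
    by case: eqP => [->|]; [rewrite (negbTE yNq) | ].
  case: q pth yNq memq => [_ _ memq|z q' /= /andP [_ pth] _ memq].
    by apply/uconnectedP => u w; rewrite !memq.
  exact: (uconnected_path pth).
Qed.

Lemma card_uedge_le_deg x : #|[set y | uedge a x y]| <= indeg a x + outdeg a x.
Proof.
have -> : [set y | uedge a x y] = [set y | a x y] :|: [set y | a y x].
  by apply/setP => y; rewrite !inE.
by rewrite cardsU addnC leq_subr.
Qed.

Lemma narcs_sum_outdeg : narcs a = \sum_x outdeg a x.
Proof.
rewrite /narcs -sum1dep_card big_mkcond /=.
rewrite -(pair_big xpredT xpredT (fun x y => if a x y then 1 else 0)) /=.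
by apply: eq_bigr => x _; rewrite /outdeg sum_indicator muln1.
Qed.

Lemma narcs_sum_indeg : narcs a = \sum_x indeg a x.
Proof.
rewrite /narcs -sum1dep_card big_mkcond /=.
rewrite -(pair_big xpredT xpredT (fun x y => if a x y then 1 else 0)) /=.
by rewrite exchange_big; apply: eq_bigr => x _; rewrite /indeg sum_indicator muln1.
Qed.

Hypothesis noloop : forall v, ~~ a v v.

Lemma uedge_irr x : uedge a x x = false.
Proof. by rewrite /uedge orbb (negbTE (noloop x)). Qed.

Lemma biconnected_two_neighbours S x :
  biconnected a S -> 2 < #|S| -> x \in S ->
  exists y1 y2, [/\ y1 \in S, y2 \in S, y1 != y2, uedge a x y1 & uedge a x y2].
Proof.
move=> bS S_gt2 xS; case/and3P: (bS) => _ /uconnectedP cS _.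
have /card_gt0P [z] : 0 < #|S :\ x|.
  by move: S_gt2; rewrite (cardsD1 x S) xS; lia.
rewrite !inE => /andP [zx zS]; rewrite eq_sym in zx.
have [y1 /and3P [_ y1S xy1]] := connect_step_from (cS _ _ xS zS) zx.
have y1x : y1 != x by apply: contraTneq xy1 => ->; rewrite uedge_irr.
have /card_gt0P [w] : 0 < #|S :\ x :\ y1|.
  move: S_gt2; rewrite (cardsD1 x S) (cardsD1 y1 (S :\ x)) xS.
  by have := leq_b1 (y1 \in S :\ x); lia.
rewrite !inE => /and3P [wy1 wx wS]; rewrite eq_sym in wx.
have /uconnectedP cSy1 := biconnected_uconnectedD1 y1 bS.
have xSy1 : x \in S :\ y1 by rewrite !inE eq_sym y1x.
have wSy1 : w \in S :\ y1 by rewrite !inE wy1.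
have [y2 /and3P [_ y2Sy1 xy2]] := connect_step_from (cSy1 _ _ xSy1 wSy1) wx.
move: y2Sy1; rewrite !inE => /andP [y2y1 y2S].
by exists y1, y2; rewrite eq_sym.
Qed.

Lemma biconnected_deg_gt1 S x :
  biconnected a S -> 2 < #|S| -> x \in S -> 1 < indeg a x + outdeg a x.
Proof.
move=> bS S_gt2 xS; apply: leq_trans (card_uedge_le_deg x).
have [y1 [y2 [_ _ y12 xy1 xy2]]] := biconnected_two_neighbours bS S_gt2 xS.
by apply/card_gt1P; exists y1, y2; rewrite !inE.
Qed.

Lemma biconnected_nedges_gt1 S :
  biconnected a S -> 2 < #|S| -> 1 < nedges_in a S.
Proof.
move=> bS S_gt2; have /card_gt0P [x xS] := ltnW (ltnW S_gt2).
have [y1 [y2 [y1S y2S y12 e1 e2]]] := biconnected_two_neighbours bS S_gt2 xS.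
have xy1 : x != y1 by apply: contraTneq e1 => <-; rewrite uedge_irr.
have xy2 : x != y2 by apply: contraTneq e2 => <-; rewrite uedge_irr.
apply/card_gt1P; move: e1 e2; rewrite /uedge.
case: (boolP (a x y1)) => A1 /= e1; case: (boolP (a x y2)) => A2 /= e2.
- by exists (x, y1), (x, y2); rewrite !inE /= xS y1S y2S A1 A2 xpair_eqE eqxx.
- by exists (x, y1), (y2, x); rewrite !inE /= xS y1S y2S A1 e2 xpair_eqE (negbTE xy2).
- exists (y1, x), (x, y2).
  by rewrite !inE /= xS y1S y2S e1 A2 xpair_eqE eq_sym (negbTE xy1).
- by exists (y1, x), (y2, x); rewrite !inE /= xS y1S y2S e1 e2 xpair_eqE (negbTE y12).
Qed.

End UnderlyingGraph.

Section DirectedAcyclic.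
Variables (T : finType) (a : rel T) (r : T).
Hypotheses (noloop : forall v, ~~ a v v)
           (acyc : forall u v, a u v -> ~~ connect a v u)
           (source : forall w, indeg a w = 0 -> w = r).

(* Walk backwards along in-arcs from x: the walk cannot meet v (x is not
   below v) and must end at the unique source r. *)
Lemma connect_root_avoiding v x :
  ~~ connect a v x -> connect (uedge_in a (setT :\ v)) r x.
Proof.
move=> vNx; move: {2}#|_| (leqnn #|[set y | connect a y x]|) => k.
elim: k x vNx => [|k IH] x vNx ancx.
  by move: ancx; rewrite leqn0 => /eqP/cards0_eq/setP/(_ x); rewrite !inE connect0.
have [->//|xr] := eqVneq x r.
have : indeg a x != 0 by apply: contra_neq xr => /source.
rewrite /indeg -lt0n => /card_gt0P [y]; rewrite inE => ayx.
have vNy : ~~ connect a v y.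
  by apply: contra vNx => vy; apply: connect_trans vy (connect1 ayx).
have ancy : #|[set z | connect a z y]| <= k.
  rewrite -ltnS; apply: leq_trans ancx; apply: proper_card; apply/properP; split.
    by apply/subsetP => z; rewrite !inE => zy; apply: connect_trans zy (connect1 ayx).
  by exists x; rewrite !inE ?connect0 // (negbTE (acyc ayx)).
apply: connect_trans (IH y vNy ancy) (connect1 _).
have xv : x != v by apply: contraNneq vNx => ->.
have yv : y != v by apply: contraNneq vNy => ->.
by rewrite /uedge_in !inE xv yv /uedge ayx.
Qed.

(* Two in-neighbours p1, p2 of v are joined avoiding v through the root;
   closing up with the arcs p1 -> v -> p2 gives the cycle. *)
Lemma indeg_gt1_cycle v : 1 < indeg a v ->
  exists c, [/\ uniq c, cycle (uedge a) c, v \in c & 2 < size c].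
Proof.
case/card_gt1P => [p1 [p2 [+ + p12]]]; rewrite !inE => ap1v ap2v.
have c1 := connect_root_avoiding (acyc ap1v).
have c2 := connect_root_avoiding (acyc ap2v).
have : connect (uedge_in a (setT :\ v)) p1 p2.
  by apply: connect_trans c2; rewrite connect_uedge_in_sym.
case/connectP => q pq lq; case: (shortenP pq) lq => q' pq' uq' _ lq'.
have p1v : p1 != v by apply: contraTneq ap1v => ->; rewrite (negbTE (noloop v)).
exists (v :: p1 :: q'); split.
- rewrite cons_uniq uq' andbT inE negb_or eq_sym p1v /=.
  apply/negP => vq'; move/allP: (uedge_in_path_mem pq') => /(_ _ vq').
  by rewrite /= !inE eqxx.
- rewrite /= rcons_path -lq' /uedge ap1v ap2v orbT andbT /=.
  by apply: sub_path pq' => x y /and3P [].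
- exact: mem_head.
- by case: q' lq' {pq' uq'} => [/= p12E|//]; rewrite p12E eqxx in p12.
Qed.

Lemma nedges_in_gt1_card_gt2 S :
  1 < nedges_in a S -> 2 < #|S|.
Proof.
case/card_gt1P => [[p1 p2] [[q1 q2] [+ + pq]]]; rewrite !inE /=.
move=> /and3P [p1S p2S apq] /and3P [q1S q2S aq].
have p12 : p1 != p2 by apply: contraTneq apq => ->; rewrite (negbTE (noloop _)).
have q12 : q1 != q2 by apply: contraTneq aq => ->; rewrite (negbTE (noloop _)).
rewrite ltnNge; apply/negP => S_le2.
have in_p x : x \in S -> (x == p1) || (x == p2).
  move=> xS; apply/negPn/negP; rewrite negb_or => /andP [xp1 xp2].
  move: S_le2; rewrite leqNgt => /negP; apply; apply/card_gt2P.
  by exists p1, p2, x; split; split; rewrite // eq_sym.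
case/orP: (in_p _ q1S) => /eqP E1; case/orP: (in_p _ q2S) => /eqP E2; subst.
- by rewrite eqxx in q12.
- by rewrite eqxx in pq.
- by move: (acyc apq); rewrite (connect1 aq).
- by rewrite eqxx in q12.
Qed.

Hypothesis notri : no_triangle a.

Lemma indeg_gt1_biconnected v : 1 < indeg a v ->
  exists C, [/\ biconnected a C, v \in C & 3 < #|C|].
Proof.
case/indeg_gt1_cycle => c [uc cc vc c_gt2].
have card_c : #|[set x in c]| = size c by rewrite cardsE (card_uniqP uc).
exists [set x in c]; split; [exact: cycle_biconnected (ltnW c_gt2)|by rewrite inE|].
rewrite card_c ltn_neqAle c_gt2 andbT; apply/negP => /eqP size_c.
case: c size_c uc cc {vc c_gt2 card_c} => [|x [|y [|z []]]] // _.
rewrite /= !inE !negb_or => /and3P [/andP [xy xz] yz _] /and4P [exy eyz ezx _].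
case: (notri exy eyz ezx) => [/eqP|[/eqP|/eqP]];
  by rewrite ?(negbTE xy) ?(negbTE yz) // eq_sym (negbTE xz).
Qed.

End DirectedAcyclic.

Lemma leaf_parent (T : finType) (a : rel T) x :
  is_leaf a x -> exists2 p, a p x & ~~ is_leaf a p.
Proof.
case/andP => /eqP indeg1 _.
have /card_gt0P [p] : 0 < indeg a x by rewrite indeg1.
rewrite inE => apx; exists p => //; apply/negP => /andP [_ /eqP outdeg0].
have : 0 < outdeg a p by apply/card_gt0P; exists x; rewrite inE.
by rewrite outdeg0.
Qed.

Section BinaryLevel1.
Variables (T : finType) (a : rel T) (r : T).
Implicit Types S : {set T}.
Hypotheses (net : phylo_network_root a r)
           (outdeg_root : outdeg a r = 2)
           (outdeg_split : forall v, is_split a v -> outdeg a v = 2)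
           (deg_hybrid : forall v, is_hybrid a v -> indeg a v = 2 /\ outdeg a v = 1)
           (level1 : forall S, bicomponent a S -> #|[set v in S | is_hybrid a v]| <= 1)
           (notri : no_triangle a).

Let noloop : forall v, ~~ a v v. Proof. by case: net => [[]]. Qed.
Let acyc : forall u v, a u v -> ~~ connect a v u. Proof. by case: net => [[]]. Qed.
Let source : forall w, indeg a w = 0 -> w = r. Proof. by case: net. Qed.

Let hybrid_block v :
  is_hybrid a v -> exists C, [/\ biconnected a C, v \in C & 3 < #|C|].
Proof. by case/andP => /(indeg_gt1_biconnected noloop acyc source notri). Qed.

Lemma deg_classification x :
  [\/ x = r /\ (indeg a x = 0 /\ outdeg a x = 2),
      x != r /\ (indeg a x = 1 /\ outdeg a x = 0),
      x != r /\ (indeg a x = 1 /\ outdeg a x = 2) |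
      x != r /\ (indeg a x = 2 /\ outdeg a x = 1)].
Proof.
case: net => _ indeg_root _ _ kinds.
have [->|xr] := eqVneq x r; first by constructor 1.
move: (kinds x xr); have [hx _|_] := boolP (is_hybrid a x).
  by constructor 4; split; last exact: deg_hybrid.
rewrite orbF; have [sx _|_] := boolP (is_split a x).
  by constructor 3; split; last split; [|case/andP: sx => /eqP|exact: outdeg_split].
by rewrite orbF => /andP [/eqP -> /eqP ->]; constructor 2.
Qed.

Lemma deg_le3 x : indeg a x + outdeg a x <= 3.
Proof. by case: (deg_classification x) => [] [_ [-> ->]]. Qed.

Lemma biconnected_hybrid_unique S v w :
  biconnected a S -> v \in S -> w \in S -> is_hybrid a v -> is_hybrid a w -> v = w.
Proof.
move=> bS vS wS hv hw; apply/eqP/negPn/negP => vw.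
have [B bcB sSB] := maxset_exists bS.
have := level1 bcB; apply/negP; rewrite -ltnNge; apply/card_gt1P.
by exists v, w; rewrite !inE hv hw (subsetP sSB _ vS) (subsetP sSB _ wS).
Qed.

Lemma biconnected_hybrids_meet S S' v w :
  biconnected a S -> biconnected a S' -> v \in S -> w \in S' -> v != w ->
  is_hybrid a v -> is_hybrid a w -> #|S :&: S'| <= 1.
Proof.
move=> bS bS' vS wS' vw hv hw; rewrite leqNgt; apply/negP => meet_gt1.
have vU : v \in S :|: S' by rewrite inE vS.
have wU : w \in S :|: S' by rewrite inE wS' orbT.
have bU := biconnectedU bS bS' meet_gt1.
by move: vw; rewrite (biconnected_hybrid_unique bU vU wU hv hw) eqxx.
Qed.

(* A common vertex x would have two neighbours in each of S and S'; these
   four are distinct since S and S' meet only in x, but deg x <= 3. *)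
Lemma biconnected_hybrids_disjoint S S' v w :
  biconnected a S -> biconnected a S' -> 2 < #|S| -> 2 < #|S'| ->
  v \in S -> w \in S' -> v != w -> is_hybrid a v -> is_hybrid a w ->
  [disjoint S & S'].
Proof.
move=> bS bS' S_gt2 S'_gt2 vS wS' vw hv hw.
have meet_le1 := biconnected_hybrids_meet bS bS' vS wS' vw hv hw.
rewrite -setI_eq0; apply/eqP/setP => x; rewrite !inE; apply/negP => /andP [xS xS'].
set Nx := [set y | uedge a x y].
have disj : (Nx :&: S) :&: (Nx :&: S') = set0.
  apply/setP => y; rewrite !inE; apply/negP => /andP [/andP [xy yS] /andP [_ yS']].
  move: meet_le1; apply/negP; rewrite -ltnNge; apply/card_gt1P.
  exists x, y; rewrite !inE xS xS' yS yS'; split => //.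
  by apply: contraTneq xy => ->; rewrite uedge_irr.
have NS_gt1 : 1 < #|Nx :&: S|.
  have [y1 [y2 [y1S y2S y12 e1 e2]]] := biconnected_two_neighbours noloop bS S_gt2 xS.
  by apply/card_gt1P; exists y1, y2; rewrite !inE e1 e2 y1S y2S.
have NS'_gt1 : 1 < #|Nx :&: S'|.
  have [y1 [y2 [y1S y2S y12 e1 e2]]] := biconnected_two_neighbours noloop bS' S'_gt2 xS'.
  by apply/card_gt1P; exists y1, y2; rewrite !inE e1 e2 y1S y2S.
have : #|(Nx :&: S) :|: (Nx :&: S')| <= #|Nx|.
  by apply/subset_leq_card/subsetP => y; rewrite !inE => /orP [] /andP [].
rewrite cardsU disj cards0 subn0 => le_Nx.
have := leq_trans le_Nx (leq_trans (card_uedge_le_deg a x) (deg_le3 x)).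
by move: NS_gt1 NS'_gt1; lia.
Qed.

Lemma biconnected_hybrid_others S v x :
  biconnected a S -> 2 < #|S| -> v \in S -> is_hybrid a v ->
  x \in S -> x != v -> (x == r) || is_split a x.
Proof.
move=> bS S_gt2 vS hv xS xv.
have := biconnected_deg_gt1 noloop bS S_gt2 xS.
case: (deg_classification x) => [[-> _]|[_ [-> ->]]|[_ [ix ox]]|[_ [ix ox]]] //.
- by rewrite eqxx.
- by rewrite /is_split ix ox orbT.
have hx : is_hybrid a x by rewrite /is_hybrid ix ox.
by move: xv; rewrite (biconnected_hybrid_unique bS xS vS hx hv) eqxx.
Qed.

Lemma card_root_splits : #|r |: splits a| <= 1 + #|splits a|.
Proof. by rewrite cardsU1 leq_add2r leq_b1. Qed.

(* Choose for every hybrid i a biconnected set through i with at least four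
   vertices; removing i leaves at least three vertices, all root or split,
   and these sets are pairwise disjoint. *)
Lemma hybrids_bound : 3 * #|hybrids a| <= 1 + #|splits a|.
Proof.
pose through i C := [&& biconnected a C, i \in C & 3 < #|C|].
pose F i := if is_hybrid a i then odflt set0 [pick C | through i C] :\ i else set0.
have F_hybrid i : is_hybrid a i ->
    exists C, [/\ biconnected a C, i \in C, 3 < #|C| & F i = C :\ i].
  move=> hi; rewrite /F hi; case: pickP => [C /and3P [bC iC C_gt3]|noC].
    by exists C.
  have [C [bC iC C_gt3]] := hybrid_block hi.
  by move: (noC C); rewrite /through bC iC C_gt3.
have F_sub i : F i \subset r |: splits a.
  have [hi|nhi] := boolP (is_hybrid a i); last by rewrite /F (negbTE nhi) sub0set.
  have [C [bC iC C_gt3 ->]] := F_hybrid i hi.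
  apply/subsetP => x; rewrite !inE => /andP [xi xC].
  exact: biconnected_hybrid_others bC (ltnW C_gt3) iC hi xC xi.
have F_disj i j : i != j -> [disjoint F i & F j].
  move=> ij; have [hi|nhi] := boolP (is_hybrid a i); last first.
    by rewrite /F (negbTE nhi) -setI_eq0 set0I.
  have [hj|nhj] := boolP (is_hybrid a j); last by rewrite /F (negbTE nhj) -setI_eq0 setI0.
  have [C [bC iC C_gt3 ->]] := F_hybrid i hi.
  have [C' [bC' jC' C'_gt3 ->]] := F_hybrid j hj.
  apply: disjointW (subsetDl C [set i]) (subsetDl C' [set j]) _.
  exact: biconnected_hybrids_disjoint bC bC' (ltnW C_gt3) (ltnW C'_gt3) iC jC' ij hi hj.
have F_card i : is_hybrid a i -> 3 <= #|F i|.
  move=> hi; have [C [bC iC C_gt3 ->]] := F_hybrid i hi.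
  by rewrite (cardsD1 i C) iC in C_gt3.
apply: leq_trans card_root_splits.
have cup_sub : \bigcup_i F i \subset r |: splits a by apply/bigcupsP => i _.
apply: leq_trans (subset_leq_card cup_sub).
rewrite -[#|\bigcup_i F i|]sum1_card (partition_disjoint_bigcup _ _ F_disj).
rewrite mulnC -sum_nat_cond_const big_mkcond /=.
by apply: leq_sum => i _; rewrite sum1_card; case: ifP => [/F_card|].
Qed.

Let card_eq_root : #|[set x | x == r]| = 1.
Proof. by rewrite -(cards1 r); apply: eq_card => x; rewrite !inE. Qed.

Lemma narcs_by_tails : narcs a = 2 + 2 * #|splits a| + #|hybrids a|.
Proof.
have outdegE x : outdeg a x = (if x == r then 2 else 0) +
    (if is_split a x then 2 else 0) + (if is_hybrid a x then 1 else 0).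
  rewrite /is_split /is_hybrid.
  by case: (deg_classification x) => [[->]|[xr]|[xr]|[xr]] [-> ->];
    rewrite ?eqxx ?(negbTE xr).
rewrite narcs_sum_outdeg (eq_bigr _ (fun x _ => outdegE x)) !big_split /=.
by rewrite !sum_indicator card_eq_root /splits /hybrids; lia.
Qed.

Lemma narcs_by_heads : narcs a = #|leaves a| + #|splits a| + 2 * #|hybrids a|.
Proof.
have indegE x : indeg a x = (if is_leaf a x then 1 else 0) +
    (if is_split a x then 1 else 0) + (if is_hybrid a x then 2 else 0).
  rewrite /is_leaf /is_split /is_hybrid.
  by case: (deg_classification x) => [] [_ [-> ->]].
rewrite narcs_sum_indeg (eq_bigr _ (fun x _ => indegE x)) !big_split /=.
by rewrite !sum_indicator /leaves /splits /hybrids; lia.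
Qed.

Lemma card_by_kinds : #|T| = 1 + #|leaves a| + #|splits a| + #|hybrids a|.
Proof.
have oneE x : 1 = (if x == r then 1 else 0) + (if is_leaf a x then 1 else 0) +
    (if is_split a x then 1 else 0) + (if is_hybrid a x then 1 else 0).
  rewrite /is_leaf /is_split /is_hybrid.
  by case: (deg_classification x) => [[->]|[xr]|[xr]|[xr]] [-> ->];
    rewrite ?eqxx ?(negbTE xr).
have -> : #|T| = \sum_(x : T) 1 by rewrite sum1_card.
rewrite (eq_bigr _ (fun x _ => oneE x)) !big_split /=.
by rewrite !sum_indicator card_eq_root /leaves /splits /hybrids; lia.
Qed.

(* With one hybrid v and two splits, a biconnected set C through v with at
   least four vertices consists of v, the root and both splits, i.e. of all
   non-leaf vertices; since galls consist of non-leaves, the block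
   containing C is the only gall. *)
Lemma one_hybrid_simple : #|hybrids a| = 1 -> #|splits a| = 2 -> simple_network a.
Proof.
move=> hybrids1 splits2.
have /card_gt0P [v] : 0 < #|hybrids a| by rewrite hybrids1.
rewrite inE => hv; have [C [bC vC C_gt3]] := hybrid_block hv.
have CD1E : C :\ v = r |: splits a.
  apply/eqP; rewrite eqEcard; apply/andP; split.
    apply/subsetP => x; rewrite !inE => /andP [xv xC].
    exact: biconnected_hybrid_others bC (ltnW C_gt3) vC hv xC xv.
  apply: leq_trans card_root_splits _.
  by rewrite splits2; move: C_gt3; rewrite (cardsD1 v C) vC.
have nonleaf_in_C x : ~~ is_leaf a x -> x \in C.
  move=> nlx; have [hx|nhx] := boolP (is_hybrid a x).
    have /card_le1P hybrids_v : #|hybrids a| <= 1 by rewrite hybrids1.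
    have vH : v \in hybrids a by rewrite inE.
    by have := hybrids_v v vH x; rewrite !inE hx => /esym/eqP ->.
  suff : x \in r |: splits a by rewrite -CD1E => /setD1P [].
  rewrite !inE /is_split; move: nlx nhx; rewrite /is_leaf /is_hybrid.
  by case: (deg_classification x) => [[-> _]|[_ [-> ->]]|[_ [-> ->]]|[_ [-> ->]]];
    rewrite ?eqxx ?orbT.
have [G maxG sCG] := maxset_exists bC.
have G_gt2 : 2 < #|G| by apply: leq_trans (ltnW C_gt3) (subset_leq_card sCG).
have gallG : is_gall a G.
  have nedgesG := biconnected_nedges_gt1 noloop (maxsetp maxG) G_gt2.
  by rewrite /is_gall /bicomponent maxG nedgesG.
split.
  by split=> //; exists r; split; last split; last split.
exists G; split=> // [G' /andP [maxG' nedges_gt1]|x].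
  apply/esym/(maxsetsup maxG' (maxsetp maxG))/subsetP => x xG'.
  apply/(subsetP sCG)/nonleaf_in_C; apply/negP => /andP [/eqP ix /eqP ox].
  have G'_gt2 := nedges_in_gt1_card_gt2 noloop acyc nedges_gt1.
  by have := biconnected_deg_gt1 noloop (maxsetp maxG') G'_gt2 xG'; rewrite ix ox.
case/leaf_parent => p apx /nonleaf_in_C pC.
by exists p; [exact: (subsetP sCG) | rewrite uedge_sym /uedge apx].
Qed.

End BinaryLevel1.

(* Eliminating s = n + h - 2 leaves |V| = 2n - 1 + 2h and |A| = 2n - 2 + 3h
   with 1 <= h and 2h <= n - 1. *)
Lemma level1_count_bounds (n s h V A : nat) :
  3 <= n -> A = 2 + 2 * s + h -> A = n + s + 2 * h -> V = 1 + n + s + h ->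
  3 * h <= 1 + s -> 0 < h ->
  [/\ 2 * n + 1 <= V, V <= 3 * n - 2, 2 * n + 1 <= A, 2 * A <= 7 * (n - 1) &
      (n = 3 -> [/\ V = 7, A = 7, h = 1 & s = 2])].
Proof. by move=> *; split; try lia; move=> *; split; lia. Qed.

Theorem mainTheorem1 (T : finType) (a : rel T) (n : nat) :
  3 <= n -> binary_level1 a -> proper_network a -> #|leaves a| = n ->
  [/\ 2 * n + 1 <= #|T|, #|T| <= 3 * n - 2,
      2 * n + 1 <= narcs a, 2 * narcs a <= 7 * (n - 1) &
      (n = 3 -> [/\ #|T| = 7, narcs a = 7 & simple_network a])].
Proof.
move=> n_ge3 [[r [net [outdeg_root [outdeg_split deg_hybrid]]]] level1 notri].
move=> [v hv] leaves_n.
have hybrids_gt0 : 0 < #|hybrids a| by apply/card_gt0P; exists v; rewrite inE.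
have tails := narcs_by_tails net outdeg_root outdeg_split deg_hybrid.
have heads := narcs_by_heads net outdeg_root outdeg_split deg_hybrid.
have card_T := card_by_kinds net outdeg_root outdeg_split deg_hybrid.
have bound := hybrids_bound net outdeg_root outdeg_split deg_hybrid level1 notri.
rewrite leaves_n in heads card_T.
have [? ? ? ? n3] := level1_count_bounds n_ge3 tails heads card_T bound hybrids_gt0.
split=> // /n3 [-> -> hybrids1 splits2]; split=> //.
exact: (one_hybrid_simple net outdeg_root outdeg_split deg_hybrid level1 notri).
Qed.
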